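(* Let $N,K,d$ be positive integers, let $\bm{r},\bm{q}\in\mathbb{R}^d$, let $\mathcal{H}$ be a finite nonempty scenario set, and for each $k\in\{1,\dots,K\}$ and $h\in\mathcal{H}$ let $\bm{M^{k,h}}\in\mathbb{R}^{d\times d}$. Let $$\mathcal{X}=\Big\{\bm{x}\in\{0,1\}^{N\times K}:\ \textstyle\sum_{k=1}^K x_{n,k}=1,\ n=1,\dots,N\Big\},$$ and for $h\in\mathcal{H}$ and $\bm{x}\in\mathcal{X}$ let $f_h(\bm{x})=\bm{r}^\top\Big[\prod_{n=1}^N\Big(\sum_{k=1}^K \bm{M^{k,h}}x_{n,k}\Big)\Big]\bm{q}$. Let $\alpha\in(0,1]$, and let $\mathcal{H}^1,\dots,\mathcal{H}^P$ be a partition of $\mathcal{H}$ into $P$ subsets of equal cardinality with $\alpha|\mathcal{H}^p|\in\mathbb{Z}_+$ for all $p$ (so also $\alpha|\mathcal{H}|\in\mathbb{Z}_+$). Let $\hat z_{\mathcal{H}}=\max_{\bm{x}\in\mathcal{X}} s_\alpha\big([f_h(\bm{x})]_{h\in\mathcal{H}}\big)$, and for each $p$ let $\bm{x^{(p)}}\in\arg\max_{\bm{x}\in\mathcal{X}} s_\alpha\big([f_h(\bm{x})]_{h\in\mathcal{H}^p}\big)$. Then $$\max_{p=1,\dots,P} s_\alpha\big([f_h(\bm{x^{(p)}})]_{h\in\mathcal{H}}\big)\ \le\ \hat z_{\mathcal{H}}\ \le\ \frac1P\sum_{p=1}^P s_\alpha\big([f_h(\bm{x^{(p)}})]_{h\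in\mathcal{H}^p}\big).$$
   Context: For a finite index set $\mathcal{G}$, a vector $\bm{\upsilon}\in\mathbb{R}^{|\mathcal{G}|}$ and $\alpha\in(0,1]$ with $\alpha|\mathcal{G}|\in\mathbb{Z}_+$, $s_\alpha(\bm{\upsilon})$ denotes the average of the $\alpha|\mathcal{G}|$ smallest entries of $\bm{\upsilon}$ (a conditional-value-at-risk type quantity). In the paper $\hat z_{\mathcal{H}}$ is defined as the optimal value of a mixed-integer linear program that is an exact reformulation of the maximization problem written above. *)

From mathcomp Require Import all_boot all_order all_algebra.
Set Implicit Arguments. Unset Strict Implicit. Unset Printing Implicit Defensive.
Import Order.TTheory GRing.Theory Num.Theory.
Local Open Scope ring_scope.

(* The number alpha*|A| is assumed (by the theorem's
   hypotheses) to be a natural number; here it is read off with truncn. *)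
Definition s_alpha (R : archiRealFieldType) (T : finType) (alpha : R)
    (A : {set T}) (v : T -> R) : R :=
  let k := Num.truncn (alpha * (#|A|)%:R) in
  (\sum_(y <- take k (sort <=%R [seq v h | h <- enum A])) y) / k%:R.

Definition inX (R : pzRingType) (N K : nat) (x : 'M[R]_(N, K)) : Prop :=
  (forall n k, x n k = 0 \/ x n k = 1) /\
  (forall n : 'I_N, \sum_(k < K) x n k = 1).

Definition fobj (R : comPzRingType) (T : finType) (N K d : nat)
    (r q : 'cV[R]_d) (M : 'I_K -> T -> 'M[R]_d) (x : 'M[R]_(N, K)) (h : T) : R :=
  ((r^T *m (\big[@mulmx R d d d / 1%:M]_(n < N) (\sum_(k < K) x n k *: M k h)))
     *m q) ord0 ord0.

From mathcomp Require Import all_boot all_order all_algebra.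
Import Order.TTheory GRing.Theory Num.Theory.
Local Open Scope ring_scope.

(* Write |H| = P m and alpha m = k.  For any x, the k smallest values of
   f(x) on each part H^p together form a sub-multiset of size P k of the values
   on H, so their total bounds the sum of the P k smallest values on H from
   above.  Dividing by P k: s_alpha on H is at most the mean over p of s_alpha on
   H^p.  Applied to a maximizer of zhat, and combined with the optimality of
   each x^(p) on H^p, this gives the upper bound; the lower bound is the
   maximality of zhat. *)

Definition sum_smallest {R : realDomainType} {T : finType} (k : nat)
    (A : {set T}) (v : T -> R) : R :=
  \sum_(y <- take k (sort <=%R [seq v h | h <- enum A])) y.

Lemma s_alphaE {R : archiRealFieldType} {T : finType} (alpha : R)
    (A : {set T}) (v : T -> R) :
  s_alpha alpha A v =
  sum_smallest (Num.truncn (alpha * #|A|%:R)) A v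
    / (Num.truncn (alpha * #|A|%:R))%:R.
Proof. by []. Qed.

Lemma sum_take_sorted_le {R : realDomainType} (u t : seq R) :
  sorted <=%R u -> (forall x, count_mem x t <= count_mem x u)%N ->
  \sum_(y <- take (size t) u) y <= \sum_(y <- t) y.
Proof.
elim: u t => [|y w IH] [|z t] sorted_yw sub_t /=; rewrite ?big_nil //.
  by have := sub_t z; rewrite /= eqxx.
move: sorted_yw; rewrite /= (path_sortedE le_trans) => /andP[/allP y_min sorted_w].
(* The head y is the minimum of y :: w: either y occurs in t, or every element
   of t lies in w and hence is at least y. *)
have [z' [z't le_yz' sub_rem]] : exists z', [/\ z' \in z :: t, y <= z' &
    forall x, (count_mem x (rem z' (z :: t)) <= count_mem x w)%N].
  case yt: (y \in z :: t).
    exists y; split=> // x; have := sub_t x.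
    by rewrite (permP (perm_to_rem yt)); set rt := rem _ _; rewrite /= leq_add2l.
  have y_notin_t : y \notin t by apply: contraFN yt; rewrite in_cons orbC => ->.
  exists z; split; first exact: mem_head.
    have : z \in y :: w by rewrite -has_pred1 has_count (leq_trans _ (sub_t z)) //= eqxx.
    by rewrite in_cons => /predU1P[zy|/y_min //]; rewrite -zy mem_head in yt.
  move=> x; rewrite /= eqxx; have := sub_t x; rewrite /=.
  have [<-|nyx] := eqVneq y x; last by rewrite add0n => /(leq_trans (leq_addl _ _)).
  by move: y_notin_t; rewrite -has_pred1 has_count -leqNgt leqn0 => /eqP->.
rewrite big_cons (perm_big _ (perm_to_rem z't)) big_cons lerD //.
by have := IH _ sorted_w sub_rem; rewrite size_rem.
Qed.

Lemma sum_take_sort_le {R : realDomainType} (s t : seq R) :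
  (forall x, count_mem x t <= count_mem x s)%N ->
  \sum_(y <- take (size t) (sort <=%R s)) y <= \sum_(y <- t) y.
Proof.
move=> sub_t; apply: sum_take_sorted_le; first exact/sort_sorted/le_total.
by move=> x; rewrite count_sort.
Qed.

Lemma count_mem_map_enum {R : eqType} {T : finType} (A : {set T}) (v : T -> R) x :
  count_mem x [seq v h | h <- enum A] = (\sum_(h in A | v h == x) 1)%N.
Proof. by rewrite count_map -sum1_count big_enum_cond. Qed.

Lemma sum_smallest_partition {R : realDomainType} {T : finType} {P : nat}
    (k : nat) (part : T -> 'I_P) (v : T -> R) :
  (forall p, k <= #|[set h | part h == p]|)%N ->
  sum_smallest (P * k) [set: T] v <=
  \sum_(p < P) sum_smallest k [set h | part h == p] v.
Proof.
move=> k_le_card.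
pose smallest p := take k (sort <=%R [seq v h | h <- enum [set h | part h == p]]).
pose t := \big[cat/[::]]_(p < P) smallest p.
have size_t : size t = (P * k)%N.
  rewrite (big_morph size (@size_cat _) (erefl (size [::]))).
  rewrite (eq_bigr (fun _ => k)) ?sum_nat_const ?card_ord // => p _.
  by rewrite size_takel // size_sort size_map -cardE.
have -> : \sum_(p < P) sum_smallest k [set h | part h == p] v = \sum_(y <- t) y.
  rewrite /t; apply/esym/(big_morph (fun s => \sum_(y <- s) y)) => [a b|].
    exact: big_cat.
  exact: big_nil.
rewrite /sum_smallest -size_t; apply: sum_take_sort_le => x.
rewrite (big_morph (count_mem x) (@count_cat _ _) (erefl (count_mem x [::]))).
rewrite count_mem_map_enum (partition_big part predT) //=.
apply: leq_sum => p _.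
apply: (@leq_trans (count_mem x (sort <=%R [seq v h | h <- enum [set h | part h == p]]))).
  by rewrite -(cat_take_drop k (sort _ _)) count_cat leq_addr.
rewrite count_sort count_mem_map_enum.
by apply: eq_leq; apply: eq_bigl => h; rewrite !in_set andbC.
Qed.

Lemma s_alpha_partition_le {R : archiRealFieldType} {T : finType}
    {P m k : nat} {part : T -> 'I_P} {alpha : R} (v : T -> R) :
  alpha <= 1 -> (forall p, #|[set h | part h == p]| = m) ->
  alpha * m%:R = k%:R ->
  s_alpha alpha [set: T] v <=
  P%:R^-1 * \sum_(p < P) s_alpha alpha [set h | part h == p] v.
Proof.
move=> alpha_le1 card_part alpha_m.
have k_le_m : (k <= m)%N by rewrite -(ler_nat R) -alpha_m ler_piMl.
have card_T : #|[set: T]| = (P * m)%N.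
  rewrite -sum1_card (partition_big part predT) //= (eq_bigr (fun _ => m)).
    by rewrite sum_nat_const card_ord.
  by move=> p _; rewrite -(card_part p) -sum1_card; apply: eq_bigl => h; rewrite !inE.
under eq_bigr => p _ do rewrite s_alphaE card_part alpha_m natrK.
rewrite s_alphaE card_T natrM mulrCA alpha_m -natrM natrK natrM invfM mulrCA.
rewrite -mulr_suml ler_wpM2l ?invr_ge0 ?ler0n // ler_wpM2r ?invr_ge0 ?ler0n //.
by apply: sum_smallest_partition => p; rewrite card_part.
Qed.

Theorem proposition2 (R : archiRealFieldType) (N K d : nat) (H : finType)
  (r q : 'cV[R]_d) (M : 'I_K -> H -> 'M[R]_d) (alpha : R)
  (P : nat) (part : H -> 'I_P) (m : nat)
  (xp : 'I_P -> 'M[R]_(N, K)) (zhat : R) :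
  (0 < N)%N -> (0 < K)%N -> (0 < d)%N -> (0 < #|H|)%N ->
  0 < alpha -> alpha <= 1 ->
  (* H^p := [set h | part h == p], p < P, is a partition of H into P parts *)
  (0 < P)%N ->
  (forall p : 'I_P, #|[set h | part h == p]| = m) ->
  (forall p : 'I_P, exists k : nat, alpha * (#|[set h | part h == p]|)%:R = k%:R) ->
  (* zhat is the maximum over X of s_alpha([f_h(x)]_{h in H}) *)
  (exists2 x : 'M[R]_(N, K), inX x & zhat = s_alpha alpha [set: H] (fobj r q M x)) ->
  (forall x : 'M[R]_(N, K), inX x -> s_alpha alpha [set: H] (fobj r q M x) <= zhat) ->
  (* x^(p) maximizes s_alpha([f_h(x)]_{h in H^p}) over X *)
  (forall p, inX (xp p)) ->
  (forall p (x : 'M[R]_(N, K)), inX x ->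
     s_alpha alpha [set h | part h == p] (fobj r q M x)
     <= s_alpha alpha [set h | part h == p] (fobj r q M (xp p))) ->
  (forall p : 'I_P, s_alpha alpha [set: H] (fobj r q M (xp p)) <= zhat) /\
  zhat <= P%:R^-1 * \sum_(p < P) s_alpha alpha [set h | part h == p] (fobj r q M (xp p)).
Proof.
move=> _ _ _ _ _ alpha_le1 P_gt0 card_part alpha_int [x x_feas ->] zhat_max
  xp_feas xp_opt.
split=> [p|]; first exact/zhat_max/xp_feas.
have [k alpha_m] : exists k, alpha * m%:R = k%:R.
  by have [k] := alpha_int (Ordinal P_gt0); rewrite card_part; exists k.
apply: le_trans (s_alpha_partition_le (fobj r q M x) alpha_le1 card_part alpha_m) _.
rewrite ler_wpM2l ?invr_ge0 ?ler0n //.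
by apply: ler_sum => p _; apply: xp_opt.
Qed.
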